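(* Consider the first-order system described in the context with arbitrary initial data $(Q^0,\mathcal N)=(q_1^0,\dots,q_N^0,\nu_1,\dots,\nu_N)\in\mathbb R^{2N}$. Then: (1) The system has a unique global classical solution (each $q_i\in C^1(\mathbb R_+;\mathbb R)$); in particular $C_i(t)$, $S_i(t)$ and $\mathcal T$ are well defined for each $i\in[N]$ and $t\in\mathbb R_+$. (2) For each $i\in[N]$, $|C_i(t)|=0$ for all but finitely many $t\in\mathbb R_+$. (3) For each $i\in[N]$ and $0\le s\le t<\infty$, $S_i(s)\subset S_i(t)$; in particular $|S_i|$ is a right-continuous nondecreasing step function. (4) $\mathcal T$ is a finite set.
   Context: Let $N\ge1$, $\kappa>0$, $\alpha\in(0,1)$, $[N]=\{1,\dots,N\}$, $\mathbb R_+=(0,\infty)$. The function $G:\mathbb R\to\mathbb R$ is $G(p)=g(|p|)\,p/|p|$ for $p\ne0$, $G(0)=0$, with $g\in C^1([0,\infty))$, $g(0)=0$, $0<m\le g'\le M$ on every compact interval (constants depending on the interval), and $g$ convex or concave on $(0,\infty)$. Let $\Psi(r)=\int_0^r|x|^{-\alpha}dx=\mathrm{sgn}(r)\frac{|r|^{1-\alpha}}{1-\alpha}$. The first-order system is \[ \dot q_i=G\Big(\nu_i+\frac{\kappa}{N}\sum_{k=1}^N\Psi(q_k-q_i)\Big),\quad q_i(0)=q_i^0,\quad i\in[N]. \] For a classical solution $Q$: $q_i,q_j$ collide at time $t$ if $q_i(t)=q_j(t)$ but $\dot q_i(t)\ne\dot q_j(t)$; they stick at time $t$ if $q_i(t)=q_j(t)$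 and $\dot q_i(t)=\dot q_j(t)$. Define $C_i(t)=\{j\in[N]: q_i,q_j \text{ collide at } t\}$, $S_i(t)=\{j\in[N]: q_i,q_j\text{ stick at }t\}$, and \[ \mathcal T=\bigcup_{i\in[N]}\big(\{t\in\mathbb R_+:|C_i(t)|\ne0\}\cup\{t\in\mathbb R_+:|S_i|\text{ is discontinuous at }t\}\big). \] *)

From Stdlib Require Import Reals Lra List ClassicalEpsilon.
From Coquelicot Require Import Coquelicot.
Open Scope R_scope.

(* finite sum over k in [0, N) ; indices 0..N-1 stand for [N] = {1..N} *)
Definition sumN (N : nat) (f : nat -> R) : R :=
  fold_right Rplus 0 (map f (seq 0 N)).

Definition Gfun (g : R -> R) (p : R) : R :=
  if Req_EM_T p 0 then 0 else g (Rabs p) * p / Rabs p.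

Definition Psi (alpha r : R) : R :=
  if Req_EM_T r 0 then 0
  else if Rlt_dec 0 r then Rpower r (1 - alpha) / (1 - alpha)
  else - (Rpower (- r) (1 - alpha) / (1 - alpha)).

(* Right-hand side of the i-th equation evaluated along Q at time t;
   for a classical solution this is \dot q_i(t) (right derivative at t=0). *)
Definition vel (N : nat) (kappa alpha : R) (g : R -> R) (nu : nat -> R)
  (q : nat -> R -> R) (i : nat) (t : R) : R :=
  Gfun g (nu i + kappa / INR N * sumN N (fun k => Psi alpha (q k t - q i t))).

Definition C1_nonneg (g dg : R -> R) : Prop :=
  (forall x, 0 <= x ->
     filterlim g (within (fun y => 0 <= y) (locally x)) (locally (g x))) /\
  (forall x, 0 < x -> is_derive g x (dg x)) /\
  (forall x, 0 <= x ->
     filterlim dg (within (fun y => 0 <= y) (locally x)) (locally (dg x))).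

Definition convex_pos (f : R -> R) : Prop :=
  forall x y l, 0 < x -> 0 < y -> 0 <= l <= 1 ->
    f (l * x + (1 - l) * y) <= l * f x + (1 - l) * f y.

Definition concave_pos (f : R -> R) : Prop :=
  forall x y l, 0 < x -> 0 < y -> 0 <= l <= 1 ->
    l * f x + (1 - l) * f y <= f (l * x + (1 - l) * y).

Definition admissible_g (g : R -> R) : Prop :=
  exists dg : R -> R,
    C1_nonneg g dg /\ g 0 = 0 /\
    (forall b, 0 <= b -> exists m M, 0 < m /\
        forall x, 0 <= x <= b -> m <= dg x <= M) /\
    (convex_pos g \/ concave_pos g).

Definition is_solution (N : nat) (kappa alpha : R) (g : R -> R)
  (q0 nu : nat -> R) (q : nat -> R -> R) : Prop :=
  forall i, (i < N)%nat ->
    q i 0 = q0 i /\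
    filterlim (q i) (at_right 0) (locally (q i 0)) /\
    (forall t, 0 < t -> is_derive (q i) t (vel N kappa alpha g nu q i t)) /\
    (forall t, 0 < t -> continuous (vel N kappa alpha g nu q i) t).

Definition collide N kappa alpha g nu q (i j : nat) (t : R) : Prop :=
  q i t = q j t /\ vel N kappa alpha g nu q i t <> vel N kappa alpha g nu q j t.

Definition stick N kappa alpha g nu q (i j : nat) (t : R) : Prop :=
  q i t = q j t /\ vel N kappa alpha g nu q i t = vel N kappa alpha g nu q j t.

Definition cardP (N : nat) (P : nat -> Prop) : nat :=
  length (filter (fun j => if excluded_middle_informative (P j) then true else false)
                 (seq 0 N)).

Definition cardC N kappa alpha g nu q i t : nat :=
  cardP N (fun j => collide N kappa alpha g nu q i j t).
Definition cardS N kappa alpha g nu q i t : nat :=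
  cardP N (fun j => stick N kappa alpha g nu q i j t).

Definition in_T N kappa alpha g nu q (t : R) : Prop :=
  0 < t /\ exists i, (i < N)%nat /\
    (cardC N kappa alpha g nu q i t <> 0%nat \/
     ~ continuous (fun s => INR (cardS N kappa alpha g nu q i s)) t).

Definition finite_set (P : R -> Prop) : Prop :=
  exists l : list R, forall t, P t -> In t l.

From Stdlib Require Import Reals Lra Lia List ClassicalEpsilon Classical ZArith.
From Coquelicot Require Import Coquelicot.
Open Scope R_scope.

(* The velocity field is quasi-monotone: the velocity of particle i does not decrease
   when the gaps q_k - q_i grow, and it increases strictly with nu_i because G does.
   Everything follows from maximum principles for such fields.

   Psi is not Lipschitz at 0, so there is no Picard iteration.  Instead the gaps are
   clamped at a level rho so large that, in any configuration of spread at least rho,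
   the leading particle is no faster than the last one.  For the clamped system, Euler
   polygons satisfy the equation up to a small defect with the slope taken at the right
   end point, and a discrete maximum principle makes two such approximate solutions
   close: the polygons are Cauchy, and their limit solves the clamped system, keeps its
   spread below rho and thus solves the original one.  The continuous maximum principle
   gives uniqueness, and also shows that a particle behind another one with larger or
   equal nu stays behind.

   At a meeting point two particles have equal velocities iff their nu agree.  Hence
   sticking is permanent, while particles with different nu cross transversally and can
   never meet again; this bounds the collisions and makes |S_i| a nondecreasing step
   function that jumps only at first sticking times. *)

(** * Finite sums, counting and finite sets *)

Lemma sumN_S n f : sumN (S n) f = sumN n f + f n.
Proof.
  unfold sumN. rewrite seq_S, map_app, fold_right_app. simpl.
  generalize (f n); intros a. induction (map f (seq 0 n)) as [|x l IH]; simpl; lra.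
Qed.

Lemma sumN_le n f h : (forall k, (k < n)%nat -> f k <= h k) -> sumN n f <= sumN n h.
Proof.
  induction n as [|n IH]; intros Hfh; [unfold sumN; simpl; lra|].
  rewrite !sumN_S. apply Rplus_le_compat; [apply IH; intros k Hk|]; apply Hfh; lia.
Qed.

Lemma sumN_ext n f h : (forall k, (k < n)%nat -> f k = h k) -> sumN n f = sumN n h.
Proof. intros Hfh. apply Rle_antisym; apply sumN_le; intros k Hk; rewrite Hfh; lra || lia. Qed.

Lemma sumN_minus n f h : sumN n (fun k => f k - h k) = sumN n f - sumN n h.
Proof. induction n as [|n IH]; [unfold sumN; simpl; lra|]. rewrite !sumN_S, IH. lra. Qed.

Lemma Rabs_sumN_le n f B : (forall k, (k < n)%nat -> Rabs (f k) <= B) ->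
  Rabs (sumN n f) <= INR n * B.
Proof.
  induction n as [|n IH]; intros Hf; [unfold sumN; simpl; rewrite Rabs_R0; lra|].
  rewrite sumN_S, S_INR. eapply Rle_trans; [apply Rabs_triang|].
  assert (Rabs (sumN n f) <= INR n * B) by (apply IH; intros k Hk; apply Hf; lia).
  assert (Rabs (f n) <= B) by (apply Hf; lia). lra.
Qed.

Lemma sumN_nonneg n f : (forall k, (k < n)%nat -> 0 <= f k) -> 0 <= sumN n f.
Proof.
  induction n as [|n IH]; intros Hf; [unfold sumN; simpl; lra|].
  rewrite sumN_S. assert (0 <= f n) by (apply Hf; lia).
  assert (0 <= sumN n f) by (apply IH; intros k Hk; apply Hf; lia). lra.
Qed.

Lemma sumN_ge_term n f j : (forall k, (k < n)%nat -> 0 <= f k) -> (j < n)%nat ->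
  f j <= sumN n f.
Proof.
  induction n as [|n IH]; intros Hf Hj; [lia|]. rewrite sumN_S.
  assert (Hrest : 0 <= sumN n f) by (apply sumN_nonneg; intros k Hk; apply Hf; lia).
  destruct (Nat.eq_dec j n) as [->|Hjn]; [lra|].
  assert (0 <= f n) by (apply Hf; lia).
  assert (f j <= sumN n f) by (apply IH; [intros k Hk; apply Hf|]; lia). lra.
Qed.

Lemma sumN_le_term n f j : (forall k, (k < n)%nat -> f k <= 0) -> (j < n)%nat ->
  sumN n f <= f j.
Proof.
  intros Hf Hj.
  assert (Hopp : sumN n (fun k => 0 - f k) = - sumN n f).
  { rewrite sumN_minus. replace (sumN n (fun _ => 0)) with 0; [lra|].
    clear. induction n; [reflexivity| rewrite sumN_S, <- IHn; lra]. }
  pose proof (sumN_ge_term n (fun k => 0 - f k) j) as Hge.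
  rewrite Hopp in Hge. assert (0 - f j <= - sumN n f); [|lra].
  apply Hge; [intros k Hk; specialize (Hf k Hk); lra | exact Hj].
Qed.

Lemma cardP_le n P P' : (forall j, (j < n)%nat -> P j -> P' j) -> (cardP n P <= cardP n P')%nat.
Proof.
  intros HPP'. unfold cardP. generalize (seq 0 n) (fun j (Hj : In j (seq 0 n)) => HPP' j
    (proj2 (proj1 (in_seq n 0 j) Hj))).
  intros l Hl. clear HPP'. induction l as [|x l IH]; simpl; [lia|].
  assert (IH' := IH (fun j Hj => Hl j (or_intror Hj))).
  destruct (excluded_middle_informative (P x)) as [Hx|Hx];
  destruct (excluded_middle_informative (P' x)) as [Hx'|Hx']; simpl; try lia.
  exfalso. apply Hx', Hl; [left; reflexivity| exact Hx].
Qed.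

Lemma cardP_ext n P P' : (forall j, (j < n)%nat -> (P j <-> P' j)) -> cardP n P = cardP n P'.
Proof. intros H. apply Nat.le_antisymm; apply cardP_le; intros j Hj; apply H, Hj. Qed.

Lemma cardP_neq_0 n P : cardP n P <> 0%nat -> exists j, (j < n)%nat /\ P j.
Proof.
  intros Hcard. apply NNPP. intros Hnone. apply Hcard, Nat.le_0_r.
  rewrite <- (cardP_ext n (fun _ => False))
    by (intros j Hj; split; [tauto| intros HPj; apply Hnone; exists j; split; assumption]).
  unfold cardP. induction (seq 0 n) as [|x l IH]; simpl; [lia|].
  destruct excluded_middle_informative; [tauto| exact IH].
Qed.

Lemma finite_set_incl (P P' : R -> Prop) : (forall t, P t -> P' t) -> finite_set P' -> finite_set P.
Proof. intros H [l Hl]. exists l. intros t Ht. apply Hl, H, Ht. Qed.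

Lemma finite_set_or (P P' : R -> Prop) :
  finite_set P -> finite_set P' -> finite_set (fun t => P t \/ P' t).
Proof. intros [l1 H1] [l2 H2]. exists (l1 ++ l2). intros t [Ht|Ht]; apply in_or_app; auto. Qed.

Lemma finite_set_bigunion n (P : nat -> R -> Prop) :
  (forall i, (i < n)%nat -> finite_set (P i)) ->
  finite_set (fun t => exists i, (i < n)%nat /\ P i t).
Proof.
  induction n as [|n IH]; intros H; [exists nil; intros t [i [Hi _]]; lia|].
  apply (finite_set_incl _ (fun t => (exists i, (i < n)%nat /\ P i t) \/ P n t)).
  - intros t [i [Hi Ht]]. destruct (Nat.eq_dec i n) as [->|Hin]; [right; exact Ht|].
    left. exists i. split; [lia| exact Ht].
  - apply finite_set_or; [apply IH; intros i Hi|]; apply H; lia.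
Qed.

Lemma finite_set_unique (P : R -> Prop) : (forall t1 t2, P t1 -> P t2 -> t1 = t2) -> finite_set P.
Proof.
  intros H. destruct (classic (exists t, P t)) as [[t0 Ht0]|Hn].
  - exists (t0 :: nil). intros t Ht. left. apply H; assumption.
  - exists nil. intros t Ht. apply Hn. exists t. exact Ht.
Qed.

(** * Induction on the reals and comparison principles *)

Lemma exists_argmax n (f : nat -> R) : (1 <= n)%nat ->
  exists i, (i < n)%nat /\ forall k, (k < n)%nat -> f k <= f i.
Proof.
  induction n as [|[|n] IH]; intros Hn; [lia| |].
  - exists 0%nat. split; [lia|]. intros k Hk. replace k with 0%nat by lia. lra.
  - destruct IH as [i [Hi Hmax]]; [lia|].
    destruct (Rle_dec (f (S n)) (f i)) as [Hle|Hgt].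
    + exists i. split; [lia|]. intros k Hk.
      destruct (Nat.eq_dec k (S n)) as [->|]; [lra| apply Hmax; lia].
    + exists (S n). split; [lia|]. intros k Hk.
      destruct (Nat.eq_dec k (S n)) as [->|]; [lra|].
      specialize (Hmax k ltac:(lia)). lra.
Qed.

Lemma exists_argmin n (f : nat -> R) : (1 <= n)%nat ->
  exists i, (i < n)%nat /\ forall k, (k < n)%nat -> f i <= f k.
Proof.
  intros Hn. destruct (exists_argmax n (fun k => - f k) Hn) as [i [Hi Hmax]].
  exists i. split; [exact Hi|]. intros k Hk. specialize (Hmax k Hk). lra.
Qed.

Lemma uniform_radius n (P : nat -> R -> Prop) :
  (forall i d d', 0 < d' <= d -> P i d -> P i d') ->
  (forall i, (i < n)%nat -> exists d, 0 < d /\ P i d) ->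
  exists d, 0 < d /\ forall i, (i < n)%nat -> P i d.
Proof.
  intros Hshrink. induction n as [|n IH]; intros Hex.
  - exists 1. split; [lra| intros; lia].
  - destruct IH as [d1 [Hd1 H1]]; [intros i Hi; apply Hex; lia|].
    destruct (Hex n ltac:(lia)) as [d2 [Hd2 H2]].
    assert (Hmin := Rmin_pos d1 d2 Hd1 Hd2).
    exists (Rmin d1 d2). split; [exact Hmin|]. intros i Hi.
    destruct (Nat.eq_dec i n) as [->|Hin].
    + apply (Hshrink n d2); [split; [exact Hmin| apply Rmin_r]| exact H2].
    + apply (Hshrink i d1); [split; [exact Hmin| apply Rmin_l]| apply H1; lia].
Qed.

Lemma real_induction (P : R -> Prop) t0 :
  P t0 ->
  (forall t, t0 <= t -> (forall s, t0 <= s <= t -> P s) ->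
     exists d, 0 < d /\ forall s, t <= s < t + d -> P s) ->
  (forall t, t0 < t -> (forall s, t0 <= s < t -> P s) -> P t) ->
  forall t, t0 <= t -> P t.
Proof.
  intros H0 Hright Hleft t1 Ht1. apply NNPP; intros Hn.
  set (A := fun u => t0 <= u /\ forall s, t0 <= s <= u -> P s).
  assert (HA0 : A t0) by (split; [lra| intros s Hs; replace s with t0 by lra; exact H0]).
  assert (HAb : bound A).
  { exists t1. intros u [Hu HP]. apply Rnot_lt_le; intros Hlt. apply Hn, HP; lra. }
  destruct (completeness A HAb (ex_intro _ t0 HA0)) as [L [HLub HLleast]].
  assert (Ht0L : t0 <= L) by (apply HLub, HA0).
  assert (Hbelow : forall s, t0 <= s < L -> P s).
  { intros s Hs. apply NNPP; intros Hns.
    enough (L <= s) by lra. apply HLleast. intros u [Hu HP].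
    apply Rnot_lt_le; intros Hlt. apply Hns, HP; lra. }
  assert (HPL : forall s, t0 <= s <= L -> P s).
  { intros s [Hs1 Hs2]. destruct (Rle_lt_or_eq_dec s L Hs2) as [Hlt| ->]; [apply Hbelow; lra|].
    destruct (Rle_lt_or_eq_dec t0 L Ht0L) as [HtL| <-]; [apply Hleft; assumption| exact H0]. }
  destruct (Hright L Ht0L HPL) as [d [Hd Hnext]].
  assert (HAnext : A (L + d / 2)).
  { split; [lra|]. intros s Hs. destruct (Rle_dec s L); [apply HPL| apply Hnext]; lra. }
  specialize (HLub _ HAnext). lra.
Qed.

Lemma step_induction (P : R -> Prop) d : 0 < d -> P 0 ->
  (forall s t, 0 <= s <= t -> t <= s + d -> P s -> P t) ->
  forall t, 0 <= t -> P t.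
Proof.
  intros Hd H0 Hstep.
  assert (Hupto : forall m t, 0 <= t <= INR m * d -> P t).
  { induction m as [|m IH]; intros t Ht.
    - simpl in Ht. replace t with 0 by lra. exact H0.
    - rewrite S_INR in Ht. assert (0 <= INR m * d) by (apply Rmult_le_pos; [apply pos_INR| lra]).
      destruct (Rle_dec t (INR m * d)); [apply IH; lra|].
      apply (Hstep (INR m * d)); [lra| lra| apply IH; lra]. }
  intros t Ht. destruct (archimed (t / d)) as [Hup _].
  assert (Hupos : (0 <= up (t / d))%Z).
  { apply le_IZR. assert (0 <= t / d) by (apply Rdiv_le_0_compat; lra). lra. }
  apply (Hupto (Z.to_nat (up (t / d)))). split; [exact Ht|].
  rewrite INR_IZR_INZ, Z2Nat.id by exact Hupos.
  apply Rlt_le. apply (Rmult_lt_reg_r (/ d)); [apply Rinv_0_lt_compat; lra|].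
  rewrite Rmult_assoc, Rinv_r by lra. unfold Rdiv in Hup. lra.
Qed.

Lemma is_derive_continuous_eps (f : R -> R) (t l : R) : is_derive f t l ->
  forall e, 0 < e -> exists d, 0 < d /\ forall s, Rabs (s - t) < d -> Rabs (f s - f t) < e.
Proof.
  intros Hf e He.
  assert (Hc : continuity_pt f t).
  { apply derivable_continuous_pt. exists l. apply is_derive_Reals, Hf. }
  destruct (Hc e He) as [d [Hd Hdd]]. exists d. split; [exact Hd|]. intros s Hs.
  destruct (Req_dec s t) as [->|Hst]; [rewrite Rminus_diag, Rabs_R0; exact He|].
  apply Hdd. split; [split; [exact I| congruence]| exact Hs].
Qed.

Lemma continuity_pt_of_eps f t :
  (forall e, 0 < e -> exists d, 0 < d /\ forall s, Rabs (s - t) < d -> Rabs (f s - f t) < e) ->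
  continuity_pt f t.
Proof.
  intros H e He. destruct (H e He) as [d [Hd Hdd]].
  exists d. split; [exact Hd|]. intros s [_ Hs]. apply Hdd, Hs.
Qed.

Lemma filterlim_at_right_of_eps (f : R -> R) (t0 : R) :
  (forall e, 0 < e -> exists d, 0 < d /\ forall s, t0 < s < t0 + d -> Rabs (f s - f t0) < e) ->
  filterlim f (at_right t0) (locally (f t0)).
Proof.
  intros H. apply filterlim_locally. intros [e He].
  destruct (H e He) as [d [Hd Hdd]]. exists (mkposreal d Hd). intros s Hs Hs0.
  apply Hdd. change (Rabs (s - t0) < d) in Hs. apply Rabs_lt_between in Hs. lra.
Qed.

Lemma filterlim_at_right_eps (f : R -> R) (t0 : R) :
  filterlim f (at_right t0) (locally (f t0)) -> forall e, 0 < e ->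
  exists d, 0 < d /\ forall s, t0 <= s < t0 + d -> Rabs (f s - f t0) < e.
Proof.
  intros Hf e He. destruct (proj1 (filterlim_locally _ _) Hf (mkposreal e He)) as [d Hd].
  exists d. split; [apply cond_pos|]. intros s Hs.
  destruct (Req_dec s t0) as [->|Hst]; [rewrite Rminus_diag, Rabs_R0; exact He|].
  apply Hd; [|lra]. change (Rabs (s - t0) < d). rewrite Rabs_pos_eq; lra.
Qed.

Lemma Un_cv_dist_le (u : nat -> R) a b c n0 : Un_cv u a ->
  (forall n, (n0 <= n)%nat -> Rabs (u n - b) <= c) -> Rabs (a - b) <= c.
Proof.
  intros Hu Hc. apply Rle_plus_epsilon. intros z Hz.
  destruct (Hu z Hz) as [n1 Hn1]. specialize (Hn1 (max n0 n1) ltac:(lia)).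
  specialize (Hc (max n0 n1) ltac:(lia)). unfold R_dist in Hn1.
  replace (a - b) with (- (u (max n0 n1) - a) + (u (max n0 n1) - b)) by ring.
  eapply Rle_trans; [apply Rabs_triang|]. rewrite Rabs_Ropp. lra.
Qed.

Lemma is_derive_gap (f f' : R -> R) (a a' t e c : R) : is_derive f t a -> is_derive f' t a' ->
  is_derive (fun u => f' u - f u - e * (u - c)) t (a' - a - e).
Proof.
  intros Hf Hf'.
  assert (Haff : is_derive (fun u => e * (u - c)) t e) by (auto_derive; [exact I| ring]).
  exact (is_derive_minus _ _ t _ _ (is_derive_minus f' f t a' a Hf' Hf) Haff).
Qed.

Lemma is_derive_pos_increasing (f : R -> R) (t l : R) : is_derive f t l -> 0 < l ->
  exists d, 0 < d /\ forall s, Rabs (s - t) < d ->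
    (s < t -> f s < f t) /\ (t < s -> f t < f s).
Proof.
  intros Hf Hl. apply is_derive_Reals in Hf.
  destruct (Hf (l / 2) ltac:(lra)) as [[d Hd] Hdd]. simpl in Hdd.
  exists d. split; [exact Hd|]. intros s Hs.
  assert (Hslope : forall s, s <> t -> Rabs (s - t) < d -> 0 < (f s - f t) / (s - t)).
  { intros u Hu Hud. specialize (Hdd (u - t) ltac:(lra) Hud).
    replace (t + (u - t)) with u in Hdd by ring. apply Rabs_lt_between in Hdd. lra. }
  assert (Hst : s <> t -> f s - f t = (f s - f t) / (s - t) * (s - t))
    by (intros Hst; field; lra).
  split; intros Hlt; specialize (Hslope s ltac:(lra) Hs); specialize (Hst ltac:(lra));
    set (r := (f s - f t) / (s - t)) in *; nra.
Qed.

Lemma is_derive_at_end_of_negative (f : R -> R) (t0 t l : R) : t0 < t ->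
  (forall s, t0 < s < t -> f s < 0) -> is_derive f t l -> f t <= 0 /\ (f t = 0 -> 0 <= l).
Proof.
  intros Ht Hneg Hf.
  assert (Hleft : forall d, 0 < d -> exists s, t0 < s < t /\ Rabs (s - t) < d).
  { intros d Hd. exists (Rmax ((t0 + t) / 2) (t - d / 2)).
    assert (Rmax ((t0 + t) / 2) (t - d / 2) < t) by (apply Rmax_lub_lt; lra).
    pose proof (Rmax_l ((t0 + t) / 2) (t - d / 2)). pose proof (Rmax_r ((t0 + t) / 2) (t - d / 2)).
    split; [lra| apply Rabs_lt_between; lra]. }
  split.
  - apply Rnot_lt_le. intros Hpos.
    destruct (is_derive_continuous_eps _ _ _ Hf (f t) Hpos) as [d [Hd Hc]].
    destruct (Hleft d Hd) as [s [Hs Hsd]].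
    specialize (Hc s Hsd). specialize (Hneg s Hs). apply Rabs_lt_between in Hc. lra.
  - intros Hzero. apply Rnot_lt_le. intros Hl.
    assert (Hopp : is_derive (fun u => - f u) t (- l)) by exact (is_derive_opp f t l Hf).
    destruct (is_derive_pos_increasing _ _ _ Hopp ltac:(lra)) as [d [Hd Hincr]].
    destruct (Hleft d Hd) as [s [Hs Hsd]].
    destruct (Hincr s Hsd) as [Hbefore _]. specialize (Hbefore ltac:(lra)).
    specialize (Hneg s Hs). lra.
Qed.

Lemma barrier_principle (K : nat) (h dh : nat -> R -> R) (t0 : R) :
  (forall a, (a < K)%nat -> exists d, 0 < d /\ forall s, t0 <= s < t0 + d -> h a s < 0) ->
  (forall a t, (a < K)%nat -> t0 < t -> is_derive (h a) t (dh a t)) ->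
  (forall a t, (a < K)%nat -> t0 < t -> h a t = 0 ->
     (forall b, (b < K)%nat -> h b t <= 0) -> dh a t < 0) ->
  forall a t, (a < K)%nat -> t0 <= t -> h a t < 0.
Proof.
  intros Hstart Hder Hkey a t Ha Ht. revert a Ha. revert t Ht.
  apply (real_induction (fun t => forall a, (a < K)%nat -> h a t < 0) t0).
  - intros a Ha. destruct (Hstart a Ha) as [d [Hd Hneg]]. apply Hneg. lra.
  - intros t Ht Hupto.
    destruct (uniform_radius K (fun a d => forall s, t <= s < t + d -> h a s < 0))
      as [d [Hd Hall]].
    + intros a d d' Hd' Hp s Hs. apply Hp. lra.
    + intros a Ha. destruct (Rle_lt_or_eq_dec t0 t Ht) as [Hlt| <-]; [|exact (Hstart a Ha)].
      specialize (Hupto t ltac:(lra) a Ha).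
      destruct (is_derive_continuous_eps _ _ _ (Hder a t Ha Hlt) (- h a t) ltac:(lra))
        as [d [Hd Hc]].
      exists d. split; [exact Hd|]. intros s Hs.
      specialize (Hc s ltac:(apply Rabs_lt_between; lra)). apply Rabs_lt_between in Hc. lra.
    + exists d. split; [exact Hd|]. intros s Hs a Ha. apply Hall; assumption.
  - intros t Ht Hbefore.
    assert (Hend : forall b, (b < K)%nat -> h b t <= 0 /\ (h b t = 0 -> 0 <= dh b t)).
    { intros b Hb. apply (is_derive_at_end_of_negative _ t0); [exact Ht| |apply Hder; assumption].
      intros s Hs. apply Hbefore; [lra| exact Hb]. }
    intros a Ha. destruct (Hend a Ha) as [[Hlt|Hzero] Hslope]; [exact Hlt|].
    specialize (Hkey a t Ha Ht Hzero (fun b Hb => proj1 (Hend b Hb))).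
    specialize (Hslope Hzero). lra.
Qed.

Lemma is_derive_of_defect (f v : R -> R) (t : R) :
  (forall e, 0 < e -> exists d, 0 < d /\ forall u, Rabs (u - t) < d -> Rabs (v u - v t) <= e) ->
  (forall e, 0 < e -> exists d, 0 < d /\ forall s u, t - d < s <= u -> u < t + d ->
     Rabs (f u - f s - (u - s) * v u) <= e * (u - s)) ->
  is_derive f t (v t).
Proof.
  intros Hv Hdefect. apply is_derive_Reals. intros eps Heps.
  destruct (Hv (eps / 3) ltac:(lra)) as [d1 [Hd1 Hv1]].
  destruct (Hdefect (eps / 3) ltac:(lra)) as [d2 [Hd2 Hf2]].
  exists (mkposreal _ (Rmin_pos d1 d2 Hd1 Hd2)). intros hh Hh0 Hhh. simpl in Hhh.
  pose proof (Rmin_l d1 d2). pose proof (Rmin_r d1 d2).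
  assert (Hnum : Rabs (f (t + hh) - f t - hh * v t) <= 2 * (eps / 3) * Rabs hh).
  { destruct (Rle_lt_dec 0 hh) as [Hpos|Hneg].
    - rewrite (Rabs_pos_eq hh) in Hhh |- * by lra.
      specialize (Hf2 t (t + hh) ltac:(lra) ltac:(lra)).
      specialize (Hv1 (t + hh) ltac:(rewrite Rabs_pos_eq by lra; lra)).
      replace (t + hh - t) with hh in Hf2 by ring.
      apply Rabs_le_between in Hf2, Hv1. apply Rabs_le_between. nra.
    - rewrite (Rabs_left hh) in Hhh |- * by lra.
      specialize (Hf2 (t + hh) t ltac:(lra) ltac:(lra)).
      replace (t - (t + hh)) with (- hh) in Hf2 by ring.
      apply Rabs_le_between in Hf2. apply Rabs_le_between. nra. }
  replace ((f (t + hh) - f t) / hh - v t) with ((f (t + hh) - f t - hh * v t) / hh)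
    by (field; exact Hh0).
  unfold Rdiv. rewrite Rabs_mult, Rabs_inv.
  apply (Rmult_lt_reg_r (Rabs hh)); [apply Rabs_pos_lt, Hh0|].
  rewrite Rmult_assoc, Rinv_l, Rmult_1_r by (apply Rabs_no_R0, Hh0).
  pose proof (Rabs_pos_lt hh Hh0). nra.
Qed.

Lemma Rabs_affine_step a b c0 sigma d s u t : s <= u <= t ->
  Rabs (a - (u - s) * c0) <= d * (u - s) -> Rabs (sigma - c0) <= d -> b = (t - u) * sigma ->
  Rabs (a + b - (t - s) * c0) <= d * (t - s).
Proof.
  intros Hsut Ha Hsigma ->.
  replace (a + (t - u) * sigma - (t - s) * c0) with
    ((a - (u - s) * c0) + (t - u) * (sigma - c0)) by ring.
  eapply Rle_trans; [apply Rabs_triang|]. rewrite Rabs_mult, (Rabs_pos_eq (t - u)) by lra.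
  assert ((t - u) * Rabs (sigma - c0) <= (t - u) * d) by (apply Rmult_le_compat_l; lra). lra.
Qed.

Definition clamp (b r : R) : R := Rmax (- b) (Rmin b r).

Lemma clamp_le b r r' : r <= r' -> clamp b r <= clamp b r'.
Proof. unfold clamp, Rmax, Rmin. repeat destruct Rle_dec; lra. Qed.

Lemma clamp_lipschitz b r r' : 0 <= b -> Rabs (clamp b r - clamp b r') <= Rabs (r - r').
Proof. unfold clamp, Rmax, Rmin, Rabs. repeat (destruct Rle_dec || destruct Rcase_abs); lra. Qed.

Lemma Rabs_clamp_le b r : 0 <= b -> Rabs (clamp b r) <= b.
Proof. unfold clamp, Rmax, Rmin, Rabs. repeat (destruct Rle_dec || destruct Rcase_abs); lra. Qed.

Lemma clamp_id b r : Rabs r <= b -> clamp b r = r.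
Proof. unfold clamp, Rmax, Rmin, Rabs. repeat (destruct Rle_dec || destruct Rcase_abs); lra. Qed.

Lemma clamp_above b r : 0 <= b <= r -> clamp b r = b.
Proof. unfold clamp, Rmax, Rmin. repeat destruct Rle_dec; lra. Qed.

Lemma clamp_below b r : 0 <= b -> r <= - b -> clamp b r = - b.
Proof. unfold clamp, Rmax, Rmin. repeat destruct Rle_dec; lra. Qed.

(** * The kernel and the response function *)

Section Model.

Variable alpha : R.
Hypothesis alpha_bounds : 0 < alpha < 1.

Lemma Psi_pos_eq r : 0 < r -> Psi alpha r = Rpower r (1 - alpha) / (1 - alpha).
Proof.
  intros Hr. unfold Psi. destruct (Req_EM_T r 0); [lra|].
  destruct (Rlt_dec 0 r); [reflexivity| lra].
Qed.

Lemma Psi_neg_eq r : r < 0 -> Psi alpha r = - (Rpower (- r) (1 - alpha) / (1 - alpha)).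
Proof.
  intros Hr. unfold Psi. destruct (Req_EM_T r 0); [lra|].
  destruct (Rlt_dec 0 r); [lra| reflexivity].
Qed.

Lemma Psi_0 : Psi alpha 0 = 0.
Proof. unfold Psi. destruct (Req_EM_T 0 0); [reflexivity| lra]. Qed.

Lemma Psi_pos r : 0 < r -> 0 < Psi alpha r.
Proof.
  intros Hr. rewrite Psi_pos_eq by exact Hr.
  apply Rdiv_lt_0_compat; [apply exp_pos| lra].
Qed.

Lemma Psi_opp r : Psi alpha (- r) = - Psi alpha r.
Proof.
  destruct (Rtotal_order r 0) as [Hr|[->|Hr]].
  - rewrite Psi_pos_eq, Psi_neg_eq by lra. lra.
  - rewrite Ropp_0, Psi_0. lra.
  - rewrite Psi_neg_eq, Psi_pos_eq by lra. rewrite Ropp_involutive. reflexivity.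
Qed.

Lemma Psi_nonneg r : 0 <= r -> 0 <= Psi alpha r.
Proof. intros [Hr| <-]; [left; apply Psi_pos, Hr| rewrite Psi_0; lra]. Qed.

Lemma Psi_le x y : x <= y -> Psi alpha x <= Psi alpha y.
Proof.
  assert (Hnonneg : forall a b, 0 <= a <= b -> Psi alpha a <= Psi alpha b).
  { intros a b [[Ha| <-] Hab]; [|rewrite Psi_0; apply Psi_nonneg; lra].
    rewrite !Psi_pos_eq by lra. unfold Rdiv.
    apply Rmult_le_compat_r; [left; apply Rinv_0_lt_compat; lra|].
    apply Rle_Rpower_l; lra. }
  intros Hxy. destruct (Rle_dec 0 x) as [Hx|Hx]; [apply Hnonneg; lra|].
  replace (Psi alpha x) with (- Psi alpha (- x)) by (rewrite Psi_opp; ring).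
  destruct (Rle_dec y 0) as [Hy|Hy].
  - replace (Psi alpha y) with (- Psi alpha (- y)) by (rewrite Psi_opp; ring).
    apply Ropp_le_contravar, Hnonneg. lra.
  - pose proof (Psi_nonneg (- x) ltac:(lra)). pose proof (Psi_nonneg y ltac:(lra)). lra.
Qed.

Lemma Psi_abs_le r b : Rabs r <= b -> Rabs (Psi alpha r) <= Psi alpha b.
Proof.
  intros Hrb. destruct (Rle_dec 0 r) as [Hr|Hr].
  - rewrite Rabs_pos_eq in Hrb |- * by (try apply Psi_nonneg; lra). apply Psi_le, Hrb.
  - rewrite Rabs_left in Hrb by lra.
    rewrite Rabs_left1, <- Psi_opp by (rewrite <- Psi_0; apply Psi_le; lra). apply Psi_le, Hrb.
Qed.

Lemma Psi_unbounded K : exists b, 0 < b /\ K <= Psi alpha b.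
Proof.
  set (b := Rpower ((1 - alpha) * (Rabs K + 1)) (/ (1 - alpha))).
  assert (Hb : 0 < b) by apply exp_pos.
  exists b. split; [exact Hb|].
  rewrite Psi_pos_eq by exact Hb. unfold b. rewrite Rpower_mult, Rinv_l, Rpower_1 by
    (pose proof (Rabs_pos K); try apply Rmult_lt_0_compat; lra).
  replace ((1 - alpha) * (Rabs K + 1) / (1 - alpha)) with (Rabs K + 1) by (field; lra).
  pose proof (RRle_abs K). lra.
Qed.

Lemma Psi_continuous r : continuity_pt (Psi alpha) r.
Proof.
  assert (Hpow : forall x, 0 < x -> continuity_pt (fun z => Rpower z (1 - alpha) / (1 - alpha)) x).
  { intros x Hx. apply continuity_pt_mult; [|apply continuity_pt_const; intros u v; reflexivity].
    apply derivable_continuous_pt. exists ((1 - alpha) * Rpower x (1 - alpha - 1)).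
    apply derivable_pt_lim_power, Hx. }
  destruct (Rtotal_order r 0) as [Hr|[->|Hr]].
  - apply continuity_pt_locally_ext
      with (f := fun z => - (Rpower (- z) (1 - alpha) / (1 - alpha))) (a := - r); [lra| |].
    + intros y Hy. unfold Rdist in Hy. apply Rabs_lt_between in Hy. rewrite Psi_neg_eq; lra.
    + apply continuity_pt_opp.
      apply (continuity_pt_comp Ropp (fun z => Rpower z (1 - alpha) / (1 - alpha))).
      * apply continuity_pt_opp, derivable_continuous_pt, derivable_pt_id.
      * apply Hpow. lra.
  - (* [Psi alpha d = e] and [|Psi x| <= Psi |x|]. *)
    intros e He. set (d := Rpower (e * (1 - alpha)) (/ (1 - alpha))).
    assert (Hd : Rpower d (1 - alpha) = e * (1 - alpha)).
    { unfold d. rewrite Rpower_mult, Rinv_l, Rpower_1 by (try apply Rmult_lt_0_compat; lra).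
      reflexivity. }
    exists d. split; [apply exp_pos|]. intros x [_ Hx]. simpl in *. unfold R_dist in *.
    rewrite Psi_0, Rminus_0_r in *.
    destruct (Req_dec x 0) as [->|Hx0]; [rewrite Psi_0, Rabs_R0; exact He|].
    assert (Hax : 0 < Rabs x) by (apply Rabs_pos_lt, Hx0).
    eapply Rle_lt_trans; [apply Psi_abs_le, Rle_refl|]. rewrite Psi_pos_eq by exact Hax.
    apply (Rmult_lt_reg_r (1 - alpha)); [lra|]. unfold Rdiv.
    rewrite Rmult_assoc, Rinv_l, Rmult_1_r by lra. rewrite <- Hd.
    apply Rlt_Rpower_l; lra.
  - apply continuity_pt_locally_ext
      with (f := fun z => Rpower z (1 - alpha) / (1 - alpha)) (a := r); [lra| |apply Hpow, Hr].
    intros y Hy. unfold Rdist in Hy. apply Rabs_lt_between in Hy. rewrite Psi_pos_eq; lra.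
Qed.

Variables g dg : R -> R.
Hypothesis g_0 : g 0 = 0.
Hypothesis g_right_cont_0 : filterlim g (within (fun y => 0 <= y) (locally 0)) (locally (g 0)).
Hypothesis g_deriv : forall x, 0 < x -> is_derive g x (dg x).
Hypothesis dg_pos : forall x, 0 < x -> 0 < dg x.

Lemma g_continuous_pos x : 0 < x -> continuity_pt g x.
Proof.
  intros Hx. apply derivable_continuous_pt. exists (dg x). apply is_derive_Reals, g_deriv, Hx.
Qed.

Lemma g_right_cont_0_eps e : 0 < e -> exists d, 0 < d /\ forall s, 0 <= s < d -> Rabs (g s) < e.
Proof.
  intros He. destruct (proj1 (filterlim_locally _ _) g_right_cont_0 (mkposreal e He)) as [d Hd].
  exists d. split; [apply cond_pos|]. intros s Hs. rewrite <- (Rminus_0_r (g s)), <- g_0.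
  apply Hd; [|lra]. change (Rabs (s - 0) < d). rewrite Rminus_0_r, Rabs_pos_eq; lra.
Qed.

Lemma g_lt_pos x y : 0 < x < y -> g x < g y.
Proof.
  intros Hxy. destruct (MVT_gen g x y dg) as [c [Hc Hmvt]];
    rewrite ?Rmin_left, ?Rmax_right in * by lra.
  - intros z Hz. apply g_deriv. lra.
  - intros z Hz. apply g_continuous_pos. lra.
  - pose proof (dg_pos c ltac:(lra)). nra.
Qed.

Lemma g_lt x y : 0 <= x < y -> g x < g y.
Proof.
  intros [[Hx| <-] Hxy]; [apply g_lt_pos; lra|].
  apply Rle_lt_trans with (g (y / 2)); [|apply g_lt_pos; lra].
  apply Rnot_lt_le. intros Hlt.
  destruct (g_right_cont_0_eps (g 0 - g (y / 2)) ltac:(lra)) as [d [Hd Hsmall]].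
  set (s := Rmin (d / 2) (y / 4)).
  assert (0 < s <= d / 2 /\ s <= y / 4)
    by (unfold s; split; [split; [apply Rmin_pos; lra| apply Rmin_l]| apply Rmin_r]).
  specialize (Hsmall s ltac:(lra)). apply Rabs_lt_between in Hsmall.
  assert (g s < g (y / 2)) by (apply g_lt_pos; lra). lra.
Qed.

Lemma g_nonneg x : 0 <= x -> 0 <= g x.
Proof. intros [Hx| <-]; [left; rewrite <- g_0; apply g_lt; lra| lra]. Qed.

Lemma Gfun_nonneg_eq p : 0 <= p -> Gfun g p = g p.
Proof.
  intros Hp. unfold Gfun. destruct (Req_EM_T p 0) as [->|Hp0]; [now rewrite g_0|].
  rewrite Rabs_pos_eq by exact Hp. field. exact Hp0.
Qed.

Lemma Gfun_nonpos_eq p : p <= 0 -> Gfun g p = - g (- p).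
Proof.
  intros Hp. unfold Gfun. destruct (Req_EM_T p 0) as [->|Hp0]; [rewrite Ropp_0, g_0; lra|].
  rewrite Rabs_left1 by exact Hp. field. exact Hp0.
Qed.

Lemma Gfun_lt p p' : p < p' -> Gfun g p < Gfun g p'.
Proof.
  intros Hpp'. destruct (Rle_dec 0 p) as [Hp|Hp].
  - rewrite !Gfun_nonneg_eq by lra. apply g_lt. lra.
  - rewrite (Gfun_nonpos_eq p) by lra. destruct (Rle_dec p' 0) as [Hp'|Hp'].
    + rewrite Gfun_nonpos_eq by lra. apply Ropp_lt_contravar, g_lt. lra.
    + rewrite Gfun_nonneg_eq by lra.
      assert (0 < g (- p)) by (rewrite <- g_0; apply g_lt; lra).
      assert (0 < g p') by (rewrite <- g_0; apply g_lt; lra). lra.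
Qed.

Lemma Gfun_le p p' : p <= p' -> Gfun g p <= Gfun g p'.
Proof. intros [Hlt| <-]; [left; apply Gfun_lt, Hlt| lra]. Qed.

Lemma Rabs_Gfun p : Rabs (Gfun g p) = g (Rabs p).
Proof.
  destruct (Rle_dec 0 p) as [Hp|Hp].
  - rewrite Gfun_nonneg_eq, !Rabs_pos_eq by (try apply g_nonneg; lra). reflexivity.
  - rewrite Gfun_nonpos_eq, Rabs_Ropp, (Rabs_left p) by lra.
    apply Rabs_pos_eq, g_nonneg. lra.
Qed.

Lemma Gfun_continuous p : continuity_pt (Gfun g) p.
Proof.
  destruct (Rtotal_order p 0) as [Hp|[->|Hp]].
  - apply continuity_pt_locally_ext with (f := fun z => - g (- z)) (a := - p); [lra| |].
    + intros y Hy. unfold Rdist in Hy. apply Rabs_lt_between in Hy. rewrite Gfun_nonpos_eq; lra.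
    + apply continuity_pt_opp, (continuity_pt_comp Ropp g).
      * apply continuity_pt_opp, derivable_continuous_pt, derivable_pt_id.
      * apply g_continuous_pos. lra.
  - intros e He. destruct (g_right_cont_0_eps e He) as [d [Hd Hsmall]].
    exists d. split; [exact Hd|]. intros x [_ Hx]. simpl in *. unfold R_dist in *.
    rewrite Rminus_0_r in Hx. rewrite (Gfun_nonneg_eq 0), g_0, Rminus_0_r, Rabs_Gfun by lra.
    rewrite <- (Rabs_pos_eq (g (Rabs x))) by (apply g_nonneg, Rabs_pos).
    apply Hsmall. split; [apply Rabs_pos| exact Hx].
  - apply continuity_pt_locally_ext with (f := g) (a := p); [lra| |apply g_continuous_pos, Hp].
    intros y Hy. unfold Rdist in Hy. apply Rabs_lt_between in Hy. rewrite Gfun_nonneg_eq; lra.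
Qed.

Variable N : nat.
Variable kappa : R.
Variables q0 nu : nat -> R.
Hypothesis N_pos : (1 <= N)%nat.
Hypothesis kappa_pos : 0 < kappa.

Lemma coupling_pos : 0 < kappa / INR N.
Proof. apply Rdiv_lt_0_compat; [exact kappa_pos| apply lt_0_INR; lia]. Qed.

Definition field_arg (phi : R -> R) (x : nat -> R) (i : nat) : R :=
  nu i + kappa / INR N * sumN N (fun k => Psi alpha (phi (x k - x i))).

(* [field (fun r => r)] is the right-hand side of the system, [field (clamp rho)] the
   clamped one used to construct solutions. *)
Definition field (phi : R -> R) (x : nat -> R) (i : nat) : R := Gfun g (field_arg phi x i).

Lemma vel_field q i t : vel N kappa alpha g nu q i t = field (fun r => r) (fun k => q k t) i.
Proof. reflexivity. Qed.

Lemma field_le (phi : R -> R) x y i j :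
  (forall r r', r <= r' -> phi r <= phi r') -> nu i <= nu j ->
  (forall k, (k < N)%nat -> x k - x i <= y k - y j) -> field phi x i <= field phi y j.
Proof.
  intros Hphi Hnu Hgap. apply Gfun_le. unfold field_arg.
  apply Rplus_le_compat; [exact Hnu|]. apply Rmult_le_compat_l; [left; apply coupling_pos|].
  apply sumN_le. intros k Hk. apply Psi_le, Hphi, Hgap, Hk.
Qed.

(** * Existence, through Euler polygons of a clamped system *)

Section Clamped.

Variable rho : R.
Hypothesis rho_pos : 0 < rho.

Local Notation cfield := (field (clamp rho)).

Definition drift_bound : R := sumN N (fun k => Rabs (nu k)) + kappa * Psi alpha rho.

Definition speed_bound : R := g drift_bound + 1.

Lemma Rabs_field_arg_le x i : (i < N)%nat -> Rabs (field_arg (clamp rho) x i) <= drift_bound.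
Proof.
  intros Hi. unfold field_arg, drift_bound. eapply Rle_trans; [apply Rabs_triang|].
  apply Rplus_le_compat.
  - apply (sumN_ge_term N (fun k => Rabs (nu k))); [intros; apply Rabs_pos| exact Hi].
  - pose proof coupling_pos. rewrite Rabs_mult, (Rabs_pos_eq (kappa / INR N)) by lra.
    replace (kappa * Psi alpha rho) with (kappa / INR N * (INR N * Psi alpha rho))
      by (field; apply not_0_INR; lia).
    apply Rmult_le_compat_l; [lra|]. apply Rabs_sumN_le. intros k Hk.
    apply Psi_abs_le, Rabs_clamp_le. lra.
Qed.

Lemma speed_bound_pos : 0 < speed_bound.
Proof.
  unfold speed_bound. enough (0 <= g drift_bound) by lra.
  apply g_nonneg. pose proof (Rabs_field_arg_le (fun _ => 0) 0 ltac:(lia)).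
  pose proof (Rabs_pos (field_arg (clamp rho) (fun _ => 0) 0)). lra.
Qed.

Lemma Rabs_cfield_le x i : (i < N)%nat -> Rabs (cfield x i) <= speed_bound.
Proof.
  intros Hi. unfold field, speed_bound. rewrite Rabs_Gfun.
  destruct (Rabs_field_arg_le x i Hi) as [Hlt| ->]; [|lra].
  enough (g (Rabs (field_arg (clamp rho) x i)) < g drift_bound) by lra.
  apply g_lt. split; [apply Rabs_pos| exact Hlt].
Qed.

Lemma cfield_uniform_cont e : 0 < e -> exists r, 0 < r /\ forall x y,
  (forall k, (k < N)%nat -> Rabs (x k - y k) <= r) ->
  forall i, (i < N)%nat -> Rabs (cfield x i - cfield y i) <= e.
Proof.
  intros He.
  destruct (Heine (Gfun g) (fun z => - drift_bound <= z <= drift_bound) (compact_P3 _ _)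
    (fun z _ => Gfun_continuous z) (mkposreal e He)) as [dG HG].
  set (c := kappa / INR N * INR N). assert (Hc : 0 < c).
  { apply Rmult_lt_0_compat; [apply coupling_pos| apply lt_0_INR; lia]. }
  assert (HePsi : 0 < dG / (2 * c)) by (apply Rdiv_lt_0_compat; [apply cond_pos| lra]).
  destruct (Heine (Psi alpha) (fun z => - rho <= z <= rho) (compact_P3 _ _)
    (fun z _ => Psi_continuous z) (mkposreal _ HePsi)) as [dPsi HPsi].
  exists (dPsi / 4). split; [pose proof (cond_pos dPsi); lra|].
  intros x y Hxy i Hi. left. unfold field.
  apply HG; try (apply Rabs_le_between, Rabs_field_arg_le, Hi).
  unfold field_arg. rewrite Rminus_plus_l_l, <- Rmult_minus_distr_l, <- sumN_minus, Rabs_mult,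
    (Rabs_pos_eq (kappa / INR N)) by (left; apply coupling_pos).
  apply Rle_lt_trans with (kappa / INR N * (INR N * (dG / (2 * c)))).
  - apply Rmult_le_compat_l; [left; apply coupling_pos|]. apply Rabs_sumN_le. intros k Hk.
    left. apply HPsi; try (apply Rabs_le_between, Rabs_clamp_le; lra).
    eapply Rle_lt_trans; [apply clamp_lipschitz; lra|].
    pose proof (Hxy k Hk) as Hk'. specialize (Hxy i Hi).
    replace (x k - x i - (y k - y i)) with ((x k - y k) - (x i - y i)) by ring.
    apply Rabs_le_between in Hk', Hxy. apply Rabs_lt_between. pose proof (cond_pos dPsi). lra.
  - rewrite <- Rmult_assoc. fold c. pose proof (cond_pos dG).
    replace (c * (dG / (2 * c))) with (dG / 2) by (field; lra). lra.
Qed.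

Fixpoint euler (h : R) (k : nat) : nat -> R :=
  match k with
  | O => q0
  | S k => fun i => euler h k i + h * cfield (euler h k) i
  end.

Definition cell (h t : R) : nat := Z.to_nat (Int_part (t / h)).

Definition polygon (h t : R) (i : nat) : R :=
  euler h (cell h t) i + (t - INR (cell h t) * h) * cfield (euler h (cell h t)) i.

Lemma cell_unique h t k : 0 < h -> INR k * h <= t < (INR k + 1) * h -> cell h t = k.
Proof.
  intros Hh [Hlo Hhi]. unfold cell.
  rewrite <- (Int_part_spec (t / h) (Z.of_nat k)), Nat2Z.id; [reflexivity|].
  rewrite <- INR_IZR_INZ. split.
  - apply (Rmult_lt_reg_r h); [exact Hh|]. unfold Rdiv.
    rewrite Rmult_minus_distr_r, Rmult_assoc, Rinv_l by lra. lra.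
  - apply (Rmult_le_reg_r h); [exact Hh|]. unfold Rdiv. rewrite Rmult_assoc, Rinv_l by lra. lra.
Qed.

Lemma cell_spec h t : 0 < h -> 0 <= t -> INR (cell h t) * h <= t < (INR (cell h t) + 1) * h.
Proof.
  intros Hh Ht. unfold cell. destruct (base_Int_part (t / h)) as [Hlo Hhi].
  assert (0 <= t / h) by (apply Rdiv_le_0_compat; lra).
  assert (Hnn : (0 <= Int_part (t / h))%Z).
  { apply Z.lt_succ_r, lt_IZR. rewrite succ_IZR. lra. }
  rewrite INR_IZR_INZ, Z2Nat.id by exact Hnn. unfold Rdiv in *. split.
  - apply (Rmult_le_reg_r (/ h)); [apply Rinv_0_lt_compat, Hh|].
    rewrite Rmult_assoc, Rinv_r by lra. lra.
  - apply (Rmult_lt_reg_r (/ h)); [apply Rinv_0_lt_compat, Hh|].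
    rewrite Rmult_assoc, Rinv_r by lra. lra.
Qed.

Lemma polygon_in_cell h t k i : 0 < h -> INR k * h <= t <= (INR k + 1) * h ->
  polygon h t i = euler h k i + (t - INR k * h) * cfield (euler h k) i.
Proof.
  intros Hh [Hlo [Hhi| ->]]; unfold polygon.
  - rewrite (cell_unique h t k); [reflexivity| exact Hh| lra].
  - rewrite (cell_unique h _ (S k)), S_INR by (rewrite ?S_INR; try split; nra).
    simpl. ring.
Qed.

Lemma polygon_grid h k i : 0 < h -> polygon h (INR k * h) i = euler h k i.
Proof. intros Hh. rewrite (polygon_in_cell h _ k) by (try split; nra). ring. Qed.

Lemma polygon_0 h i : 0 < h -> polygon h 0 i = q0 i.
Proof. intros Hh. rewrite <- (Rmult_0_l h). exact (polygon_grid h 0 i Hh). Qed.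

Lemma polygon_incr h s t i c0 d : 0 < h -> 0 <= s <= t ->
  (forall k, INR k * h <= t -> s < (INR k + 1) * h -> Rabs (cfield (euler h k) i - c0) <= d) ->
  Rabs (polygon h t i - polygon h s i - (t - s) * c0) <= d * (t - s).
Proof.
  intros Hh Hst Hslopes. destruct (cell_spec h s Hh (proj1 Hst)) as [Hks Hks'].
  set (k := cell h s) in *.
  assert (Hcells : forall m u, s <= u <= t -> u <= (INR (k + m) + 1) * h ->
    Rabs (polygon h u i - polygon h s i - (u - s) * c0) <= d * (u - s)).
  { induction m as [|m IH]; intros u Hu Hum.
    - rewrite Nat.add_0_r in Hum. replace (polygon h u i - polygon h s i) with
        (0 + (polygon h u i - polygon h s i)) by ring.
      apply (Rabs_affine_step _ _ _ (cfield (euler h k) i) _ s s u); [lra| |apply Hslopes; lra|].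
      + rewrite Rminus_diag, Rmult_0_l, Rminus_0_r, Rabs_R0, Rmult_0_r. lra.
      + rewrite !(polygon_in_cell h _ k) by lra. ring.
    - rewrite plus_INR, S_INR in Hum. rewrite plus_INR in IH.
      set (v := (INR k + INR m + 1) * h) in *.
      destruct (Rle_dec u v) as [Huv|Huv]; [apply IH; lra|].
      assert (Hsv : s <= v) by (unfold v; pose proof (pos_INR m); nra).
      replace (polygon h u i - polygon h s i) with
        ((polygon h v i - polygon h s i) + (polygon h u i - polygon h v i)) by ring.
      apply (Rabs_affine_step _ _ _ (cfield (euler h (k + S m)) i) _ s v u);
        [lra| apply IH; lra| |].
      + apply Hslopes; rewrite plus_INR, S_INR; unfold v in *; lra.
      + rewrite !(polygon_in_cell h _ (k + S m)) by (rewrite ?plus_INR, ?S_INR; unfold v in *; lra).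
        ring. }
  destruct (cell_spec h t Hh ltac:(lra)) as [_ Hkt].
  apply (Hcells (cell h t) t); [lra|].
  rewrite plus_INR. pose proof (pos_INR k). nra.
Qed.

Lemma polygon_lipschitz h s t i : 0 < h -> 0 <= s <= t -> (i < N)%nat ->
  Rabs (polygon h t i - polygon h s i) <= speed_bound * (t - s).
Proof.
  intros Hh Hst Hi. rewrite <- (Rminus_0_r (polygon h t i - polygon h s i)),
    <- (Rmult_0_r (t - s)).
  apply polygon_incr; [exact Hh| exact Hst|]. intros k _ _.
  rewrite Rminus_0_r. apply Rabs_cfield_le, Hi.
Qed.

(* Taking the slope at the right end point [t] is what makes the maximum principle
   [approx_sol_gap_le] work. *)
Definition approx_sol (A : R -> nat -> R) (e eta : R) : Prop :=
  forall s t, 0 <= s <= t -> t <= s + eta -> forall i, (i < N)%nat ->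
    Rabs (A t i - A s i - (t - s) * cfield (A t) i) <= e * (t - s).

Lemma polygon_approx_sol e : 0 < e -> exists eta, 0 < eta /\
  forall h, 0 < h <= eta -> approx_sol (polygon h) e eta.
Proof.
  intros He. destruct (cfield_uniform_cont e He) as [r [Hr Hmod]].
  pose proof speed_bound_pos as HV.
  exists (r / (2 * speed_bound)). split; [apply Rdiv_lt_0_compat; lra|].
  intros h [Hh Hheta] s t Hst Hte i Hi. apply polygon_incr; [exact Hh| exact Hst|].
  intros k Hkt Hks. apply Hmod; [|exact Hi]. intros j Hj.
  assert (Hk : 0 <= INR k * h) by (apply Rmult_le_pos; [apply pos_INR| lra]).
  rewrite <- (polygon_grid h k j Hh), Rabs_minus_sym.
  eapply Rle_trans; [apply polygon_lipschitz; [exact Hh| lra| exact Hj]|].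
  apply (Rmult_le_reg_r (/ speed_bound)); [apply Rinv_0_lt_compat, HV|].
  replace (speed_bound * (t - INR k * h) * / speed_bound) with (t - INR k * h) by (field; lra).
  replace (r * / speed_bound) with (2 * (r / (2 * speed_bound))) by (field; lra). lra.
Qed.

Lemma approx_sol_gap_le A B e eta : 0 < eta -> (forall i, (i < N)%nat -> A 0 i = B 0 i) ->
  approx_sol A e eta -> approx_sol B e eta ->
  forall t, 0 <= t -> forall i, (i < N)%nat -> A t i - B t i <= 2 * e * t.
Proof.
  intros Heta H0 HA HB.
  apply (step_induction (fun t => forall i, (i < N)%nat -> A t i - B t i <= 2 * e * t) eta Heta).
  - intros i Hi. rewrite H0 by exact Hi. lra.
  - intros s t Hst Hte Hs.
    destruct (exists_argmax N (fun k => A t k - B t k) N_pos) as [i0 [Hi0 Hmax]].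
    assert (Hslope : cfield (A t) i0 <= cfield (B t) i0).
    { apply field_le; [apply clamp_le| lra|]. intros k Hk. specialize (Hmax k Hk). lra. }
    specialize (HA s t Hst Hte i0 Hi0). specialize (HB s t Hst Hte i0 Hi0).
    specialize (Hs i0 Hi0). apply Rabs_le_between in HA, HB.
    assert ((t - s) * cfield (A t) i0 <= (t - s) * cfield (B t) i0)
      by (apply Rmult_le_compat_l; lra).
    intros i Hi. specialize (Hmax i Hi). lra.
Qed.

Definition mesh (n : nat) : R := / (INR n + 1).

Lemma mesh_pos n : 0 < mesh n.
Proof. apply Rinv_0_lt_compat. pose proof (pos_INR n). lra. Qed.

Lemma mesh_le eta : 0 < eta -> exists n0, forall n, (n0 <= n)%nat -> mesh n <= eta.
Proof.
  intros Heta. destruct (archimed (/ eta)) as [Hup _].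
  assert (0 < / eta) by (apply Rinv_0_lt_compat, Heta).
  exists (Z.to_nat (up (/ eta))). intros n Hn. apply le_INR in Hn.
  rewrite INR_IZR_INZ, Z2Nat.id in Hn by (apply le_IZR; lra).
  unfold mesh. rewrite <- (Rinv_inv eta). apply Rinv_le_contravar; lra.
Qed.

Lemma polygon_cauchy e : 0 < e -> exists n0, forall n m, (n0 <= n)%nat -> (n0 <= m)%nat ->
  forall t, 0 <= t -> forall i, (i < N)%nat ->
    Rabs (polygon (mesh n) t i - polygon (mesh m) t i) <= 2 * e * t.
Proof.
  intros He. destruct (polygon_approx_sol e He) as [eta [Heta Happrox]].
  destruct (mesh_le eta Heta) as [n0 Hn0]. exists n0. intros n m Hn Hm t Ht i Hi.
  assert (Hn' := Happrox _ (conj (mesh_pos n) (Hn0 n Hn))).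
  assert (Hm' := Happrox _ (conj (mesh_pos m) (Hn0 m Hm))).
  assert (H0 : forall j, (j < N)%nat -> polygon (mesh n) 0 j = polygon (mesh m) 0 j)
    by (intros j Hj; rewrite !polygon_0 by apply mesh_pos; reflexivity).
  pose proof (approx_sol_gap_le _ _ e eta Heta H0 Hn' Hm' t Ht i Hi).
  pose proof (approx_sol_gap_le _ _ e eta Heta (fun j Hj => eq_sym (H0 j Hj)) Hm' Hn' t Ht i Hi).
  apply Rabs_le_between. lra.
Qed.

Definition euler_limit (t : R) (i : nat) : R := real (Lim_seq (fun n => polygon (mesh n) t i)).

Lemma euler_limit_cv t i : 0 <= t -> (i < N)%nat ->
  Un_cv (fun n => polygon (mesh n) t i) (euler_limit t i).
Proof.
  intros Ht Hi.
  assert (Hcauchy : Cauchy_crit (fun n => polygon (mesh n) t i)).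
  { intros eps Heps. set (e := eps / (2 * (2 * t + 1))).
    assert (He : 0 < e) by (unfold e; apply Rdiv_lt_0_compat; lra).
    destruct (polygon_cauchy e He) as [n0 Hn0]. exists n0. intros n m Hn Hm.
    unfold R_dist. eapply Rle_lt_trans; [apply Hn0; lia || assumption|].
    unfold e. apply (Rmult_lt_reg_r (2 * (2 * t + 1))); [lra|].
    field_simplify; [nra| lra]. }
  destruct (Rcomplete.R_complete _ Hcauchy) as [l Hl].
  unfold euler_limit. rewrite (is_lim_seq_unique _ l); [exact Hl| apply is_lim_seq_Reals, Hl].
Qed.

Lemma euler_limit_0 i : (i < N)%nat -> euler_limit 0 i = q0 i.
Proof.
  intros Hi. apply Rminus_diag_uniq, Rabs_eq_0, Rle_antisym; [|apply Rabs_pos].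
  apply (Un_cv_dist_le _ _ _ _ 0 (euler_limit_cv 0 i (Rle_refl 0) Hi)). intros n _.
  rewrite polygon_0, Rminus_diag, Rabs_R0 by apply mesh_pos. lra.
Qed.

Lemma euler_limit_lipschitz s t i : 0 <= s <= t -> (i < N)%nat ->
  Rabs (euler_limit t i - euler_limit s i) <= speed_bound * (t - s).
Proof.
  intros Hst Hi. rewrite <- (Rminus_0_r (euler_limit t i - euler_limit s i)).
  apply (Un_cv_dist_le _ _ _ _ 0 (CV_minus _ _ _ _ (euler_limit_cv t i ltac:(lra) Hi)
    (euler_limit_cv s i ltac:(lra) Hi))).
  intros n _. rewrite Rminus_0_r. apply polygon_lipschitz; [apply mesh_pos| exact Hst| exact Hi].
Qed.

Lemma euler_limit_approx z T : 0 < z -> 0 <= T -> exists n0, forall n, (n0 <= n)%nat ->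
  forall t i, 0 <= t <= T -> (i < N)%nat -> Rabs (euler_limit t i - polygon (mesh n) t i) <= z.
Proof.
  intros Hz HT. set (e := z / (2 * T + 1)).
  assert (He : 0 < e) by (unfold e; apply Rdiv_lt_0_compat; lra).
  destruct (polygon_cauchy e He) as [n0 Hn0]. exists n0. intros n Hn t i Ht Hi.
  apply (Un_cv_dist_le _ _ _ _ n0 (euler_limit_cv t i ltac:(lra) Hi)). intros m Hm.
  eapply Rle_trans; [apply Hn0; lra || assumption|].
  unfold e. apply (Rmult_le_reg_r (2 * T + 1)); [lra|]. field_simplify; [nra| lra].
Qed.

Lemma approx_sol_uniform_limit A e eta :
  (forall z T, 0 < z -> 0 <= T -> exists B, approx_sol B e eta /\
     forall t i, 0 <= t <= T -> (i < N)%nat -> Rabs (A t i - B t i) <= z) ->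
  forall e', 0 < e' -> approx_sol A (e + e') eta.
Proof.
  intros Hlim e' He' s t Hst Hte i Hi.
  destruct (cfield_uniform_cont e' He') as [r [Hr Hmod]].
  apply Rle_plus_epsilon. intros z Hz. set (z' := Rmin (z / 2) r).
  assert (Hz' : 0 < z' <= z / 2 /\ z' <= r)
    by (unfold z'; split; [split; [apply Rmin_pos; lra| apply Rmin_l]| apply Rmin_r]).
  destruct (Hlim z' t ltac:(lra) ltac:(lra)) as [B [HB Hclose]].
  assert (Hslope : Rabs (cfield (B t) i - cfield (A t) i) <= e').
  { apply Hmod; [|exact Hi]. intros k Hk. rewrite Rabs_minus_sym.
    eapply Rle_trans; [apply Hclose; lra || assumption| lra]. }
  specialize (HB s t Hst Hte i Hi). pose proof (Hclose t i ltac:(lra) Hi) as Ht.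
  pose proof (Hclose s i ltac:(lra) Hi) as Hs.
  apply Rabs_le_between in HB, Ht, Hs, Hslope. apply Rabs_le_between.
  assert (Hts : 0 <= t - s) by lra. split; nra.
Qed.

Lemma euler_limit_approx_sol e : 0 < e -> exists eta, 0 < eta /\ approx_sol euler_limit e eta.
Proof.
  intros He. destruct (polygon_approx_sol (e / 2) ltac:(lra)) as [eta [Heta Happrox]].
  exists eta. split; [exact Heta|]. replace e with (e / 2 + e / 2) by field.
  apply approx_sol_uniform_limit; [|lra]. intros z T Hz HT.
  destruct (euler_limit_approx z T Hz HT) as [n0 Hn0]. destruct (mesh_le eta Heta) as [n1 Hn1].
  exists (polygon (mesh (max n0 n1))). split.
  - apply Happrox. split; [apply mesh_pos| apply Hn1; lia].
  - intros t i Ht Hi. apply Hn0; [lia| exact Ht| exact Hi].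
Qed.

Hypothesis rho_nu : forall i j, (i < N)%nat -> (j < N)%nat ->
  nu i - nu j <= 2 * (kappa / INR N) * Psi alpha rho.
Hypothesis rho_q0 : forall i j, (i < N)%nat -> (j < N)%nat -> q0 i - q0 j <= rho.

Lemma cfield_extremes_le x i0 j0 : (i0 < N)%nat -> (j0 < N)%nat ->
  (forall k, (k < N)%nat -> x j0 <= x k <= x i0) -> rho <= x i0 - x j0 ->
  cfield x i0 <= cfield x j0.
Proof.
  intros Hi0 Hj0 Hext Hgap. apply Gfun_le. unfold field_arg.
  assert (Hclamp0 : clamp rho 0 = 0) by (apply clamp_id; rewrite Rabs_R0; lra).
  assert (Hlow : sumN N (fun k => Psi alpha (clamp rho (x k - x i0))) <= - Psi alpha rho).
  { eapply Rle_trans; [apply (sumN_le_term _ _ j0); [|exact Hj0]|].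
    - intros k Hk. rewrite <- Psi_0, <- Hclamp0. apply Psi_le, clamp_le.
      specialize (Hext k Hk). lra.
    - cbv beta. rewrite clamp_below, Psi_opp by lra. lra. }
  assert (Hhigh : Psi alpha rho <= sumN N (fun k => Psi alpha (clamp rho (x k - x j0)))).
  { eapply Rle_trans; [|apply (sumN_ge_term _ _ i0); [|exact Hi0]].
    - cbv beta. rewrite clamp_above by lra. lra.
    - intros k Hk. rewrite <- Psi_0, <- Hclamp0. apply Psi_le, clamp_le.
      specialize (Hext k Hk). lra. }
  pose proof (rho_nu i0 j0 Hi0 Hj0). pose proof coupling_pos.
  assert (kappa / INR N * sumN N (fun k => Psi alpha (clamp rho (x k - x i0)))
    <= kappa / INR N * - Psi alpha rho) by (apply Rmult_le_compat_l; lra).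
  assert (kappa / INR N * Psi alpha rho
    <= kappa / INR N * sumN N (fun k => Psi alpha (clamp rho (x k - x j0))))
    by (apply Rmult_le_compat_l; lra).
  lra.
Qed.

Lemma euler_limit_gap_le_eps e : 0 < e -> forall t, 0 <= t ->
  forall i j, (i < N)%nat -> (j < N)%nat -> euler_limit t i - euler_limit t j <= rho + 2 * e * t.
Proof.
  intros He. destruct (euler_limit_approx_sol e He) as [eta [Heta Happrox]].
  apply (step_induction (fun t => forall i j, (i < N)%nat -> (j < N)%nat ->
    euler_limit t i - euler_limit t j <= rho + 2 * e * t) eta Heta).
  - intros i j Hi Hj. rewrite !euler_limit_0 by assumption. specialize (rho_q0 i j Hi Hj). lra.
  - intros s t Hst Hte Hs.
    destruct (exists_argmax N (euler_limit t) N_pos) as [i0 [Hi0 Hmax]].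
    destruct (exists_argmin N (euler_limit t) N_pos) as [j0 [Hj0 Hmin]].
    enough (euler_limit t i0 - euler_limit t j0 <= rho + 2 * e * t).
    { intros i j Hi Hj. specialize (Hmax i Hi). specialize (Hmin j Hj). lra. }
    assert (0 <= 2 * e * t) by (apply Rmult_le_pos; lra).
    destruct (Rle_dec (euler_limit t i0 - euler_limit t j0) rho) as [Hle|Hgt]; [lra|].
    assert (Hslope : cfield (euler_limit t) i0 <= cfield (euler_limit t) j0).
    { apply cfield_extremes_le; [exact Hi0| exact Hj0| |lra].
      intros k Hk. split; [apply Hmin| apply Hmax]; exact Hk. }
    pose proof (Happrox s t Hst Hte i0 Hi0) as Di. pose proof (Happrox s t Hst Hte j0 Hj0) as Dj.
    apply Rabs_le_between in Di, Dj. specialize (Hs i0 j0 Hi0 Hj0).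
    assert ((t - s) * cfield (euler_limit t) i0 <= (t - s) * cfield (euler_limit t) j0)
      by (apply Rmult_le_compat_l; lra).
    lra.
Qed.

Lemma euler_limit_gap_le t i j : 0 <= t -> (i < N)%nat -> (j < N)%nat ->
  euler_limit t i - euler_limit t j <= rho.
Proof.
  intros Ht Hi Hj. apply Rle_plus_epsilon. intros z Hz.
  set (e := z / (2 * t + 1)). assert (He : 0 < e) by (unfold e; apply Rdiv_lt_0_compat; lra).
  pose proof (euler_limit_gap_le_eps e He t Ht i j Hi Hj).
  enough (2 * e * t <= z) by lra.
  unfold e. apply (Rmult_le_reg_r (2 * t + 1)); [lra|]. field_simplify; [nra| lra].
Qed.

Lemma cfield_euler_limit t i : 0 <= t -> (i < N)%nat ->
  cfield (euler_limit t) i = field (fun r => r) (euler_limit t) i.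
Proof.
  intros Ht Hi. unfold field, field_arg. do 3 f_equal. apply sumN_ext. intros k Hk.
  rewrite clamp_id; [reflexivity|]. apply Rabs_le_between.
  pose proof (euler_limit_gap_le t k i Ht Hk Hi). pose proof (euler_limit_gap_le t i k Ht Hi Hk).
  lra.
Qed.

Lemma cfield_euler_limit_continuous t i : 0 <= t -> (i < N)%nat -> forall e, 0 < e ->
  exists d, 0 < d /\ forall u, 0 <= u -> Rabs (u - t) < d ->
    Rabs (cfield (euler_limit u) i - cfield (euler_limit t) i) <= e.
Proof.
  intros Ht Hi e He. destruct (cfield_uniform_cont e He) as [r [Hr Hmod]].
  pose proof speed_bound_pos. exists (r / speed_bound). split; [apply Rdiv_lt_0_compat; lra|].
  intros u Hu Hut. apply Hmod; [|exact Hi]. intros k Hk.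
  assert (Hlip : Rabs (euler_limit u k - euler_limit t k) <= speed_bound * Rabs (u - t)).
  { destruct (Rle_dec t u).
    - rewrite (Rabs_pos_eq (u - t)) by lra. apply euler_limit_lipschitz; [lra| exact Hk].
    - rewrite Rabs_minus_sym, (Rabs_left (u - t)) by lra.
      replace (- (u - t)) with (t - u) by ring. apply euler_limit_lipschitz; [lra| exact Hk]. }
  eapply Rle_trans; [exact Hlip|].
  apply (Rmult_le_reg_r (/ speed_bound)); [apply Rinv_0_lt_compat; lra|].
  replace (speed_bound * Rabs (u - t) * / speed_bound) with (Rabs (u - t)) by (field; lra).
  unfold Rdiv in Hut. lra.
Qed.

Lemma euler_limit_is_derive t i : 0 < t -> (i < N)%nat ->
  is_derive (fun u => euler_limit u i) t (cfield (euler_limit t) i).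
Proof.
  intros Ht Hi. apply (is_derive_of_defect _ (fun u => cfield (euler_limit u) i)).
  - intros e He. destruct (cfield_euler_limit_continuous t i ltac:(lra) Hi e He) as [d [Hd Hcont]].
    exists (Rmin d t). split; [apply Rmin_pos; lra|]. intros u Hu.
    pose proof (Rmin_l d t). pose proof (Rmin_r d t).
    apply Hcont; [apply Rabs_lt_between in Hu; lra| lra].
  - intros e He. destruct (euler_limit_approx_sol e He) as [eta [Heta Happrox]].
    exists (Rmin (eta / 2) t). split; [apply Rmin_pos; lra|]. intros s u Hs Hu.
    pose proof (Rmin_l (eta / 2) t). pose proof (Rmin_r (eta / 2) t).
    apply Happrox; [lra| lra| exact Hi].
Qed.

Lemma euler_limit_is_solution : is_solution N kappa alpha g q0 nu (fun i t => euler_limit t i).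
Proof.
  pose proof speed_bound_pos as HV.
  intros i Hi. split; [|split; [|split]].
  - apply euler_limit_0, Hi.
  - apply filterlim_at_right_of_eps. intros e He. exists (e / (2 * speed_bound)).
    split; [apply Rdiv_lt_0_compat; lra|]. intros s Hs.
    eapply Rle_lt_trans; [apply euler_limit_lipschitz; [lra| exact Hi]|].
    apply (Rlt_le_trans _ (speed_bound * (e / (2 * speed_bound)))); [apply Rmult_lt_compat_l; lra|].
    replace (speed_bound * (e / (2 * speed_bound))) with (e / 2) by (field; lra). lra.
  - intros t Ht. rewrite vel_field, <- cfield_euler_limit by (lra || exact Hi).
    apply euler_limit_is_derive; assumption.
  - intros t Ht. apply continuity_pt_filterlim, continuity_pt_of_eps. intros e He.
    destruct (cfield_euler_limit_continuous t i ltac:(lra) Hi (e / 2) ltac:(lra)) as [d [Hd Hcont]].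
    exists (Rmin d t). split; [apply Rmin_pos; lra|]. intros u Hu.
    pose proof (Rmin_l d t). pose proof (Rmin_r d t). apply Rabs_lt_between in Hu as Hu'.
    rewrite !vel_field, <- !cfield_euler_limit by (lra || exact Hi).
    eapply Rle_lt_trans; [apply Hcont; lra| lra].
Qed.

End Clamped.

Lemma exists_clamp_radius : exists rho, 0 < rho /\
  (forall i j, (i < N)%nat -> (j < N)%nat -> nu i - nu j <= 2 * (kappa / INR N) * Psi alpha rho) /\
  (forall i j, (i < N)%nat -> (j < N)%nat -> q0 i - q0 j <= rho).
Proof.
  pose proof coupling_pos as Hc.
  set (Snu := sumN N (fun k => Rabs (nu k))). set (Sq := sumN N (fun k => Rabs (q0 k))).
  assert (Habs : forall (f : nat -> R) i j, (i < N)%nat -> (j < N)%nat ->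
    f i - f j <= 2 * sumN N (fun k => Rabs (f k))).
  { intros f i j Hi Hj.
    pose proof (sumN_ge_term N (fun k => Rabs (f k)) i (fun k _ => Rabs_pos (f k)) Hi).
    pose proof (sumN_ge_term N (fun k => Rabs (f k)) j (fun k _ => Rabs_pos (f k)) Hj).
    pose proof (RRle_abs (f i)). pose proof (Rabs_maj2 (f j)). lra. }
  destruct (Psi_unbounded (Snu / (kappa / INR N))) as [b [Hb HPsi]].
  assert (HSq : 0 <= Sq) by (apply sumN_nonneg; intros; apply Rabs_pos).
  exists (b + 2 * Sq). split; [lra| split].
  - intros i j Hi Hj. eapply Rle_trans; [apply (Habs nu i j Hi Hj)|]. fold Snu.
    assert (Snu <= kappa / INR N * Psi alpha b).
    { apply (Rmult_le_reg_r (/ (kappa / INR N))); [apply Rinv_0_lt_compat, Hc|].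
      rewrite (Rmult_comm (kappa / INR N)), Rmult_assoc, Rinv_r, Rmult_1_r by lra. exact HPsi. }
    assert (kappa / INR N * Psi alpha b <= kappa / INR N * Psi alpha (b + 2 * Sq))
      by (apply Rmult_le_compat_l; [lra| apply Psi_le; lra]).
    lra.
  - intros i j Hi Hj. pose proof (Habs q0 i j Hi Hj) as Hq. fold Sq in Hq. lra.
Qed.

Lemma exists_solution : exists q, is_solution N kappa alpha g q0 nu q.
Proof.
  destruct exists_clamp_radius as [rho [Hrho [Hnu Hq0]]].
  eexists. exact (euler_limit_is_solution rho Hrho Hnu Hq0).
Qed.

(** * Uniqueness, order of the particles, collisions and sticking *)

Local Notation sol q := (is_solution N kappa alpha g q0 nu q).
Local Notation v q i t := (vel N kappa alpha g nu q i t).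

Lemma sol_right_cont q i s0 : sol q -> (i < N)%nat -> 0 <= s0 -> forall e, 0 < e ->
  exists d, 0 < d /\ forall s, s0 <= s < s0 + d -> Rabs (q i s - q i s0) < e.
Proof.
  intros Hq Hi Hs0 e He. destruct (Hq i Hi) as [_ [Hright [Hder _]]].
  destruct Hs0 as [Hs0| <-]; [|exact (filterlim_at_right_eps _ _ Hright e He)].
  destruct (is_derive_continuous_eps _ _ _ (Hder s0 Hs0) e He) as [d [Hd Hc]].
  exists d. split; [exact Hd|]. intros s Hs. apply Hc, Rabs_lt_between. lra.
Qed.

Lemma sol_gap_eventually_lt q q' i j s0 c : sol q -> sol q' -> (i < N)%nat -> (j < N)%nat ->
  0 <= s0 -> q' j s0 - q i s0 < c ->
  exists d, 0 < d /\ forall s, s0 <= s < s0 + d -> q' j s - q i s < c.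
Proof.
  intros Hq Hq' Hi Hj Hs0 Hgap. set (e := (c - (q' j s0 - q i s0)) / 2).
  destruct (sol_right_cont q i s0 Hq Hi Hs0 e ltac:(unfold e; lra)) as [d1 [Hd1 H1]].
  destruct (sol_right_cont q' j s0 Hq' Hj Hs0 e ltac:(unfold e; lra)) as [d2 [Hd2 H2]].
  exists (Rmin d1 d2). split; [apply Rmin_pos; assumption|]. intros s Hs.
  pose proof (Rmin_l d1 d2). pose proof (Rmin_r d1 d2).
  specialize (H1 s ltac:(lra)). specialize (H2 s ltac:(lra)).
  apply Rabs_lt_between in H1, H2. unfold e in *. lra.
Qed.

Lemma sol_le q q' : sol q -> sol q' -> forall i t, (i < N)%nat -> 0 <= t -> q' i t <= q i t.
Proof.
  intros Hq Hq' i t Hi Ht. apply Rle_plus_epsilon. intros z Hz.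
  set (e := z / (1 + t)). assert (He : 0 < e) by (unfold e; apply Rdiv_lt_0_compat; lra).
  assert (Hez : e * (t - (0 - 1)) = z) by (unfold e; field; lra).
  enough (q' i t - q i t - e * (t - (0 - 1)) < 0) by lra.
  apply (barrier_principle N (fun a u => q' a u - q a u - e * (u - (0 - 1)))
    (fun a u => v q' a u - v q a u - e) 0); [| | |exact Hi| exact Ht].
  - intros a Ha. destruct (Hq a Ha) as [Hq0 _]. destruct (Hq' a Ha) as [Hq0' _].
    destruct (sol_gap_eventually_lt q q' a a 0 e Hq Hq' Ha Ha (Rle_refl 0)
      ltac:(rewrite Hq0, Hq0'; lra)) as [d [Hd Hnear]].
    exists d. split; [exact Hd|]. intros s Hs. specialize (Hnear s Hs).
    assert (0 <= e * s) by (apply Rmult_le_pos; lra). lra.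
  - intros a u Ha Hu. apply is_derive_gap; [apply Hq| apply Hq']; assumption.
  - intros a u Ha Hu Hzero Hall.
    assert (v q' a u <= v q a u).
    { rewrite !vel_field. apply field_le; [tauto| lra|].
      intros k Hk. specialize (Hall k Hk). cbv beta in *. lra. }
    lra.
Qed.

Lemma sol_order_le q i j s0 : sol q -> (i < N)%nat -> (j < N)%nat -> 0 <= s0 ->
  nu i <= nu j -> q i s0 <= q j s0 -> forall t, s0 <= t -> q i t <= q j t.
Proof.
  intros Hq Hi Hj Hs0 Hnu Hstart t Ht. apply Rle_plus_epsilon. intros z Hz.
  set (e := z / (1 + t - s0)). assert (He : 0 < e) by (unfold e; apply Rdiv_lt_0_compat; lra).
  assert (Hez : e * (t - (s0 - 1)) = z) by (unfold e; field; lra).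
  enough (q i t - q j t - e * (t - (s0 - 1)) < 0) by lra.
  refine (barrier_principle 1 (fun _ u => q i u - q j u - e * (u - (s0 - 1)))
    (fun _ u => v q i u - v q j u - e) s0 _ _ _ 0%nat t Nat.lt_0_1 Ht).
  - intros _ _. destruct (sol_gap_eventually_lt q q j i s0 e Hq Hq Hj Hi Hs0 ltac:(lra))
      as [d [Hd Hnear]].
    exists d. split; [exact Hd|]. intros s Hs. specialize (Hnear s Hs).
    assert (e * 1 <= e * (s - (s0 - 1))) by (apply Rmult_le_compat_l; lra). lra.
  - intros _ u _ Hu. apply is_derive_gap; [apply Hq| apply Hq]; lra || assumption.
  - intros _ u _ Hu Hzero _.
    assert (0 < e * (u - (s0 - 1))) by (apply Rmult_lt_0_compat; lra).
    assert (v q i u <= v q j u).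
    { rewrite !vel_field. apply field_le; [tauto| exact Hnu|]. intros k Hk. lra. }
    lra.
Qed.

Lemma vel_lt_of_eq q i j t : q i t = q j t -> nu i < nu j -> v q i t < v q j t.
Proof. intros Hq Hnu. rewrite !vel_field. apply Gfun_lt. unfold field_arg. rewrite Hq. lra. Qed.

Lemma stick_iff q i j t :
  stick N kappa alpha g nu q i j t <-> q i t = q j t /\ nu i = nu j.
Proof.
  unfold stick. split; intros [Hq Hv]; split; [exact Hq| | exact Hq|].
  - destruct (Rtotal_order (nu i) (nu j)) as [Hlt|[Heq|Hlt]]; [| exact Heq|].
    + pose proof (vel_lt_of_eq q i j t Hq Hlt). lra.
    + pose proof (vel_lt_of_eq q j i t (eq_sym Hq) Hlt). lra.
  - rewrite !vel_field. unfold field, field_arg. rewrite Hq, Hv. reflexivity.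
Qed.

Lemma collide_iff q i j t :
  collide N kappa alpha g nu q i j t <-> q i t = q j t /\ nu i <> nu j.
Proof.
  unfold collide. split; intros [Hq Hv]; split; try exact Hq; intros Heq; apply Hv.
  - apply (proj2 (stick_iff q i j t)). split; assumption.
  - apply (proj1 (stick_iff q i j t)). split; assumption.
Qed.

Lemma stick_persist q i j s t : sol q -> (i < N)%nat -> (j < N)%nat -> 0 <= s <= t ->
  stick N kappa alpha g nu q i j s -> stick N kappa alpha g nu q i j t.
Proof.
  intros Hq Hi Hj Hst Hs. apply stick_iff in Hs as [Hqs Hnu]. apply stick_iff.
  split; [|exact Hnu]. apply Rle_antisym.
  - apply (sol_order_le q i j s); lra || assumption.
  - apply (sol_order_le q j i s); lra || assumption.
Qed.

Lemma meet_transversal q i j t : sol q -> (i < N)%nat -> (j < N)%nat -> nu j < nu i ->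
  0 < t -> q i t = q j t -> exists d, 0 < d /\ forall s, Rabs (s - t) < d ->
    (s < t -> q i s < q j s) /\ (t < s -> q j s < q i s).
Proof.
  intros Hq Hi Hj Hnu Ht Heq.
  assert (Hder : is_derive (fun u => q i u - q j u) t (v q i t - v q j t)).
  { destruct (Hq i Hi) as [_ [_ [Di _]]]. destruct (Hq j Hj) as [_ [_ [Dj _]]].
    exact (is_derive_minus (q i) (q j) t _ _ (Di t Ht) (Dj t Ht)). }
  destruct (is_derive_pos_increasing _ _ _ Hder) as [d [Hd Hsign]].
  { pose proof (vel_lt_of_eq q j i t (eq_sym Heq) Hnu). lra. }
  exists d. split; [exact Hd|]. intros s Hs. rewrite Heq, Rminus_diag in Hsign.
  destruct (Hsign s Hs) as [Hl Hr].
  split; intros Hst; [specialize (Hl Hst)| specialize (Hr Hst)]; lra.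
Qed.

Lemma meet_once q i j t1 t2 : sol q -> (i < N)%nat -> (j < N)%nat -> nu j < nu i ->
  0 < t1 < t2 -> q i t1 = q j t1 -> q i t2 = q j t2 -> False.
Proof.
  intros Hq Hi Hj Hnu Ht Heq1 Heq2.
  destruct (meet_transversal q i j t1 Hq Hi Hj Hnu ltac:(lra) Heq1) as [d1 [Hd1 H1]].
  destruct (meet_transversal q i j t2 Hq Hi Hj Hnu ltac:(lra) Heq2) as [d2 [Hd2 H2]].
  set (s1 := t1 + Rmin d1 (t2 - t1) / 2).
  set (s2 := Rmax s1 (t2 - d2 / 2)).
  pose proof (Rmin_l d1 (t2 - t1)). pose proof (Rmin_r d1 (t2 - t1)).
  assert (Hmin : 0 < Rmin d1 (t2 - t1)) by (apply Rmin_pos; lra).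
  assert (Hs2 : s1 <= s2 < t2 /\ t2 - d2 < s2).
  { unfold s2. pose proof (Rmax_l s1 (t2 - d2 / 2)). pose proof (Rmax_r s1 (t2 - d2 / 2)).
    assert (Rmax s1 (t2 - d2 / 2) < t2) by (apply Rmax_lub_lt; unfold s1; lra). lra. }
  assert (Hafter : q j s1 < q i s1) by (apply H1; [apply Rabs_lt_between|]; unfold s1; lra).
  assert (Hbefore : q i s2 < q j s2) by (apply H2; [apply Rabs_lt_between|]; lra).
  assert (q j s2 <= q i s2); [|lra].
  apply (sol_order_le q j i s1); [exact Hq| exact Hj| exact Hi| unfold s1; lra| lra| lra| lra].
Qed.

Local Notation stk q i j t := (stick N kappa alpha g nu q i j t).
Local Notation card_stick q i t := (cardS N kappa alpha g nu q i t).

Lemma collision_times_finite q i : sol q -> (i < N)%nat ->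
  finite_set (fun t => 0 < t /\ cardC N kappa alpha g nu q i t <> 0%nat).
Proof.
  intros Hq Hi. apply (finite_set_incl _
    (fun t => exists j, (j < N)%nat /\ (0 < t /\ collide N kappa alpha g nu q i j t))).
  - intros t [Ht Hc]. destruct (cardP_neq_0 _ _ Hc) as [j [Hj Hcol]]. exists j. auto.
  - apply finite_set_bigunion. intros j Hj. apply finite_set_unique.
    intros t1 t2 [Ht1 C1] [Ht2 C2].
    apply collide_iff in C1 as [E1 Hnu], C2 as [E2 _].
    assert (Honce : forall s1 s2, 0 < s1 < s2 -> q i s1 = q j s1 -> q i s2 = q j s2 -> False).
    { intros s1 s2 Hs F1 F2. destruct (Rtotal_order (nu i) (nu j)) as [Hlt|[Heq|Hgt]];
        [| contradiction|].
      - exact (meet_once q j i s1 s2 Hq Hj Hi Hlt Hs (eq_sym F1) (eq_sym F2)).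
      - exact (meet_once q i j s1 s2 Hq Hi Hj Hgt Hs F1 F2). }
    destruct (Rtotal_order t1 t2) as [Hlt|[Heq|Hlt]]; [| exact Heq|]; exfalso;
      [apply (Honce t1 t2)| apply (Honce t2 t1)]; lra || assumption.
Qed.

Lemma stick_right_const q i j t : sol q -> (i < N)%nat -> (j < N)%nat -> 0 <= t ->
  exists d, 0 < d /\ forall s, t <= s < t + d -> (stk q i j s <-> stk q i j t).
Proof.
  intros Hq Hi Hj Ht. destruct (classic (stk q i j t)) as [Hs|Hns].
  - exists 1. split; [lra|]. intros s Hs'. split; [intros _; exact Hs|].
    intros _. apply (stick_persist q i j t s); lra || assumption.
  - enough (exists d, 0 < d /\ forall s, t <= s < t + d -> q i s <> q j s \/ nu i <> nu j)
      as [d [Hd Hnot]].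
    { exists d. split; [exact Hd|]. intros s Hs'. split; [|contradiction].
      intros Hss. apply stick_iff in Hss as [Heq Hnu]. destruct (Hnot s Hs'); contradiction. }
    destruct (classic (nu i = nu j)) as [Hnu|Hnu];
      [|exists 1; split; [lra| intros; right; exact Hnu]].
    assert (Hneq : q i t <> q j t) by (intros Heq; apply Hns, stick_iff; split; assumption).
    destruct (Rdichotomy _ _ Hneq) as [Hlt|Hgt].
    + destruct (sol_gap_eventually_lt q q j i t 0 Hq Hq Hj Hi Ht ltac:(lra)) as [d [Hd Hnear]].
      exists d. split; [exact Hd|]. intros s Hs. left. specialize (Hnear s Hs). lra.
    + destruct (sol_gap_eventually_lt q q i j t 0 Hq Hq Hi Hj Ht ltac:(lra)) as [d [Hd Hnear]].
      exists d. split; [exact Hd|]. intros s Hs. left. specialize (Hnear s Hs). lra.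
Qed.

Lemma card_stick_right_const q i t : sol q -> (i < N)%nat -> 0 <= t ->
  exists d, 0 < d /\ forall s, t <= s < t + d -> card_stick q i s = card_stick q i t.
Proof.
  intros Hq Hi Ht.
  destruct (uniform_radius N (fun j d => forall s, t <= s < t + d -> (stk q i j s <-> stk q i j t)))
    as [d [Hd Hall]].
  - intros j d d' Hd' Hp s Hs. apply Hp. lra.
  - intros j Hj. apply stick_right_const; assumption.
  - exists d. split; [exact Hd|]. intros s Hs. apply cardP_ext. intros j Hj. apply Hall; assumption.
Qed.

Definition first_stick q i j t : Prop :=
  0 < t /\ stk q i j t /\ forall s, 0 < s < t -> ~ stk q i j s.

Lemma card_stick_locally_const q i t : sol q -> (i < N)%nat -> 0 < t ->
  (forall j, (j < N)%nat -> ~ first_stick q i j t) ->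
  exists d, 0 < d /\ forall s, Rabs (s - t) < d -> card_stick q i s = card_stick q i t.
Proof.
  intros Hq Hi Ht Hnotfirst.
  destruct (uniform_radius N
    (fun j d => forall s, Rabs (s - t) < d -> (stk q i j s <-> stk q i j t)))
    as [d [Hd Hall]].
  - intros j d d' Hd' Hp s Hs. apply Hp. lra.
  - intros j Hj. destruct (classic (stk q i j t)) as [Hs|Hns].
    + destruct (not_all_not_ex _ (fun s => 0 < s < t /\ stk q i j s)) as [s0 [Hs0 Hstick0]].
      { intros Hnone. apply (Hnotfirst j Hj). split; [exact Ht| split; [exact Hs|]].
        intros s Hs' Hss. apply (Hnone s). split; assumption. }
      exists (t - s0). split; [lra|]. intros s Hs'. apply Rabs_lt_between in Hs'.
      split; [intros _; exact Hs|]. intros _. apply (stick_persist q i j s0 s); lra || assumption.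
    + destruct (stick_right_const q i j t Hq Hi Hj ltac:(lra)) as [d [Hd Hright]].
      exists (Rmin d t). split; [apply Rmin_pos; lra|]. intros s Hs'.
      pose proof (Rmin_l d t). pose proof (Rmin_r d t). apply Rabs_lt_between in Hs'.
      destruct (Rle_dec t s); [apply Hright; lra|]. split; [|contradiction].
      intros Hss. apply (stick_persist q i j s t); lra || assumption.
  - exists d. split; [exact Hd|]. intros s Hs. apply cardP_ext. intros j Hj. apply Hall; assumption.
Qed.

Lemma card_stick_discontinuities_finite q i : sol q -> (i < N)%nat ->
  finite_set (fun t => 0 < t /\ ~ continuous (fun s => INR (card_stick q i s)) t).
Proof.
  intros Hq Hi. apply (finite_set_incl _ (fun t => exists j, (j < N)%nat /\ first_stick q i j t)).
  - intros t [Ht Hdisc]. apply NNPP. intros Hnone. apply Hdisc.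
    destruct (card_stick_locally_const q i t Hq Hi Ht) as [d [Hd Hconst]].
    { intros j Hj Hfirst. apply Hnone. exists j. split; assumption. }
    apply continuity_pt_filterlim, continuity_pt_of_eps. intros e He. exists d.
    split; [exact Hd|]. intros s Hs. rewrite Hconst, Rminus_diag, Rabs_R0 by exact Hs. exact He.
  - apply finite_set_bigunion. intros j Hj. apply finite_set_unique.
    intros t1 t2 [Ht1 [Hs1 Hfirst1]] [Ht2 [Hs2 Hfirst2]].
    destruct (Rtotal_order t1 t2) as [Hlt|[Heq|Hlt]]; [exfalso| exact Heq| exfalso].
    + apply (Hfirst2 t1); [lra| exact Hs1].
    + apply (Hfirst1 t2); [lra| exact Hs2].
Qed.

Lemma exceptional_set_finite q : sol q -> finite_set (in_T N kappa alpha g nu q).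
Proof.
  intros Hq. apply (finite_set_incl _ (fun t => exists i, (i < N)%nat /\
    ((0 < t /\ cardC N kappa alpha g nu q i t <> 0%nat) \/
     (0 < t /\ ~ continuous (fun s => INR (card_stick q i s)) t)))).
  - intros t [Ht [i [Hi [Hc|Hc]]]]; exists i; split; auto.
  - apply finite_set_bigunion. intros i Hi. apply finite_set_or.
    + apply collision_times_finite; assumption.
    + apply card_stick_discontinuities_finite; assumption.
Qed.

End Model.

Theorem proposition3p3 (N : nat) (kappa alpha : R) (g : R -> R)
  (q0 nu : nat -> R) :
  (1 <= N)%nat -> 0 < kappa -> 0 < alpha < 1 -> admissible_g g ->
  exists q : nat -> R -> R,
    (* (1) existence and uniqueness of the global classical solution *)
    is_solution N kappa alpha g q0 nu q /\
    (forall q', is_solution N kappa alpha g q0 nu q' ->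
       forall i t, (i < N)%nat -> 0 <= t -> q' i t = q i t) /\
    (* (2) finitely many collision times for each i *)
    (forall i, (i < N)%nat ->
       finite_set (fun t => 0 < t /\ cardC N kappa alpha g nu q i t <> 0%nat)) /\
    (* (3) monotonicity of S_i, and |S_i| right-continuous nondecreasing step function *)
    (forall i, (i < N)%nat ->
       (forall s t, 0 <= s <= t -> forall j, (j < N)%nat ->
          stick N kappa alpha g nu q i j s -> stick N kappa alpha g nu q i j t) /\
       (forall s t, 0 <= s <= t ->
          (cardS N kappa alpha g nu q i s <= cardS N kappa alpha g nu q i t)%nat) /\
       (forall t, 0 <= t -> exists d, 0 < d /\ forall s, t <= s < t + d ->
          cardS N kappa alpha g nu q i s = cardS N kappa alpha g nu q i t) /\
       finite_set (fun t => 0 < t /\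
          ~ continuous (fun s => INR (cardS N kappa alpha g nu q i s)) t)) /\
    (* (4) the exceptional set T is finite *)
    finite_set (in_T N kappa alpha g nu q).
Proof.
  intros HN Hk Ha [dg [[Hcont [Hder _]] [Hg0 [Hbounds _]]]].
  pose proof (Hcont 0 (Rle_refl 0)) as Hcont0.
  assert (Hdg : forall x, 0 < x -> 0 < dg x).
  { intros x Hx. destruct (Hbounds x ltac:(lra)) as [m [M [Hm Hmx]]].
    specialize (Hmx x ltac:(lra)). lra. }
  destruct (exists_solution alpha Ha g dg Hg0 Hcont0 Hder Hdg N kappa q0 nu HN Hk) as [q Hq].
  exists q. split; [exact Hq|]. split; [|split; [|split]].
  - intros q' Hq' i t Hi Ht. apply Rle_antisym; eapply sol_le; eauto.
  - intros i Hi. eapply collision_times_finite; eauto.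
  - intros i Hi. split; [|split; [|split]].
    + intros s t Hst j Hj. eapply stick_persist; eauto.
    + intros s t Hst. apply cardP_le. intros j Hj. eapply stick_persist; eauto.
    + intros t Ht. eapply card_stick_right_const; eauto.
    + eapply card_stick_discontinuities_finite; eauto.
  - eapply exceptional_set_finite; eauto.
Qed.
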